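(* Let $R$ be a ring, $\mathfrak{M}$ a formation of $R$-modules, $G$ a group and $A$ an $RG$-module. (i) If $L\le H$ are subgroups of $G$ and $A/C_A(H)\in\mathfrak{M}$, then $A/C_A(L)\in\mathfrak{M}$. (ii) If $L,H$ are subgroups of $G$ with $A/C_A(H)\in\mathfrak{M}$ and $A/C_A(L)\in\mathfrak{M}$, then $A/C_A(\langle H,L\rangle)\in\mathfrak{M}$.
   Context: For a subgroup $H\le G$, $C_A(H)=\{a\in A: ah=a \text{ for all } h\in H\}$ (an $R$-submodule). A class $\mathfrak{M}$ of $R$-modules is a formation if (F1) whenever $A\in\mathfrak{M}$ and $B$ is an $R$-submodule of $A$, then $A/B\in\mathfrak{M}$; and (F2) whenever $A$ is an $R$-module and $B_1,\dots,B_k$ are $R$-submodules with $A/B_j\in\mathfrak{M}$ for all $j$, then $A/(B_1\cap\dots\cap B_k)\in\mathfrak{M}$. *)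

From HB Require Import structures.
From mathcomp Require Import all_boot all_order all_algebra.
From mathcomp Require Import monoid.
Set Implicit Arguments. Unset Strict Implicit. Unset Printing Implicit Defensive.
Import GRing.Theory.
Local Open Scope ring_scope.

(* Modules over a ring R are MathComp left modules [lmodType R].
   Submodules and "classes" are Prop-valued predicates (membership in
   C_A(H) is not decidable in general). *)

Section Defs.
Variable R : pzRingType.

Definition is_submod (A : lmodType R) (B : A -> Prop) : Prop :=
  B 0 /\ forall (r : R) (a b : A), B a -> B b -> B (r *: a + b).

Definition is_Rlinear (A Q : lmodType R) (f : A -> Q) : Prop :=
  forall (r : R) (a b : A), f (r *: a + b) = r *: f a + f b.

(* "A/B belongs to the class M": the quotient A/B is (isomorphic to) a
   member of M, i.e. there is a surjective R-linear map from A onto a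
   module of M whose kernel is exactly B. *)
Definition quot_in (M : lmodType R -> Prop) (A : lmodType R) (B : A -> Prop)
  : Prop :=
  exists (Q : lmodType R) (f : A -> Q),
    [/\ M Q, is_Rlinear f, (forall q : Q, exists a : A, f a = q)
      & (forall a : A, f a = 0 <-> B a)].

Definition formation (M : lmodType R -> Prop) : Prop :=
  (forall (A : lmodType R) (B : A -> Prop),
      M A -> is_submod B -> quot_in M B)
  /\
  (forall (A : lmodType R) (k : nat) (B : 'I_k.+1 -> A -> Prop),
      (forall j, is_submod (B j)) ->
      (forall j, quot_in M (B j)) ->
      quot_in M (fun a => forall j, B j a)).
End Defs.

Section Groups.
Variable G : groupType.
Local Open Scope group_scope.

Definition is_subgroup (H : G -> Prop) : Prop :=
  H 1 /\ (forall x y, H x -> H y -> H (x * y)) /\ (forall x, H x -> H x^-1).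

Definition gen_subgroup (S : G -> Prop) : G -> Prop :=
  fun x => forall K, is_subgroup K -> (forall y, S y -> K y) -> K x.

Definition join_subgroup (H L : G -> Prop) : G -> Prop :=
  gen_subgroup (fun x => H x \/ L x).
End Groups.

Section RGmod.
Variables (R : pzRingType) (G : groupType).
Local Open Scope group_scope.

Definition is_RGaction (A : lmodType R) (act : A -> G -> A) : Prop :=
  [/\ (forall a, act a 1 = a),
      (forall a g h, act a (g * h) = act (act a g) h)
    & (forall g, is_Rlinear (fun a => act a g))].

Definition centr (A : lmodType R) (act : A -> G -> A) (H : G -> Prop)
  : A -> Prop :=
  fun a => forall h, H h -> act a h = a.
End RGmod.

From HB Require Import structures.
From mathcomp Require Import all_boot all_order all_algebra.
From mathcomp Require Import monoid.
Set Implicit Arguments. Unset Strict Implicit. Unset Printing Implicit Defensive.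
Import GRing.Theory.
Local Open Scope ring_scope.

(* (i): C_A(H) <= C_A(L), so A/C_A(L) is a quotient of A/C_A(H) and (F1) applies.
   (ii): C_A(<H, L>) = C_A(H) \cap C_A(L), because the stabiliser of a point
   is a subgroup; now apply (F2) to the two centralisers. *)

Section Linear.
Variables (R : pzRingType) (A Q : lmodType R) (f : A -> Q).
Hypothesis lin_f : is_Rlinear f.

Lemma Rlinear_sub a b : f (a - b) = f a - f b.
Proof.
have := lin_f (-1) b a.
by rewrite !scaleN1r addrC => ->; rewrite addrC.
Qed.

Lemma Rlinear0 : f 0 = 0.
Proof. by have := Rlinear_sub 0 0; rewrite !subrr. Qed.

End Linear.

Section Quotients.
Variables (R : pzRingType) (M : lmodType R -> Prop).

Lemma quot_in_ext (A : lmodType R) (B C : A -> Prop) :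
  (forall a, B a <-> C a) -> quot_in M B -> quot_in M C.
Proof.
move=> eBC [Q [f [MQ lf sf kf]]]; exists Q, f; split=> // a.
by split=> [/kf/eBC|/eBC/kf].
Qed.

(* The image f(C) of C in Q = A/B is the kernel of Q -> A/C. *)
Lemma quot_in_sup (A : lmodType R) (B C : A -> Prop) :
  (forall (Q : lmodType R) (D : Q -> Prop), M Q -> is_submod D -> quot_in M D) ->
  is_submod C -> (forall a, B a -> C a) -> quot_in M B -> quot_in M C.
Proof.
move=> F1 [C0 C_closed] sBC [Q [f [MQ lf sf kf]]].
pose fC := fun q : Q => exists2 a, f a = q & C a.
have submod_fC : is_submod fC.
  split; first by exists 0; [exact: Rlinear0|].
  move=> r _ _ [a <- Ca] [b <- Cb].
  by exists (r *: a + b); [exact: lf | exact: C_closed].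
have [P [g [MP lg sg kg]]] := F1 Q fC MQ submod_fC.
exists P, (fun a => g (f a)); split=> //.
- by move=> r a b; rewrite lf lg.
- by move=> p; have [q <-] := sg p; have [a <-] := sf q; exists a.
move=> a; split=> [/kg [a' faa' Ca'] | Ca]; last by apply/kg; exists a.
have Cdiff : C (a - a') by apply/sBC/kf; rewrite Rlinear_sub // faa' subrr.
by have := C_closed 1 _ _ Cdiff Ca'; rewrite scale1r subrK.
Qed.

Lemma quot_in_meet2 (A : lmodType R) (B C : A -> Prop) : formation M ->
  is_submod B -> is_submod C -> quot_in M B -> quot_in M C ->
  quot_in M (fun a => B a /\ C a).
Proof.
move=> [_ F2] subB subC qB qC.
pose D := fun j : 'I_2 => if j == ord0 then B else C.
have subD j : is_submod (D j) by rewrite /D; case: ifP.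
have qD j : quot_in M (D j) by rewrite /D; case: ifP.
apply: quot_in_ext (F2 A 1 D subD qD) => a.
split=> [BCa | [Ba Ca] j]; last by rewrite /D; case: ifP.
by split; [exact: BCa ord0 | exact: BCa (lift ord0 ord0)].
Qed.

End Quotients.

Section Centralisers.
Variables (R : pzRingType) (G : groupType) (A : lmodType R) (act : A -> G -> A).
Hypothesis act_ok : is_RGaction act.

Lemma submod_centr (H : G -> Prop) : is_submod (centr act H).
Proof.
case: act_ok => _ _ lin; split; first by move=> h _; exact: (@Rlinear0 _ _ _ (act^~ h) (lin h)).
by move=> r a b ca cb h Hh; rewrite (lin h) ca // cb.
Qed.

Lemma centrS (L H : G -> Prop) :
  (forall x, L x -> H x) -> forall a, centr act H a -> centr act L a.
Proof. by move=> sLH a cHa h /sLH; exact: cHa. Qed.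

Lemma is_subgroup_stab (a : A) : is_subgroup (fun g => act a g = a).
Proof.
case: act_ok => act1 actM _; split; first exact: act1.
split=> [x y ax ay | x ax]; first by rewrite actM ax ay.
by rewrite -{1}ax -actM mulgV act1.
Qed.

Lemma centr_join (H L : G -> Prop) a :
  centr act H a /\ centr act L a <-> centr act (join_subgroup H L) a.
Proof.
split=> [[cHa cLa] g HLg | cHLa].
  by apply: HLg (is_subgroup_stab a) _ => y [/cHa | /cLa].
by split=> h Xh; apply: cHLa => K _; apply; [left | right].
Qed.

End Centralisers.

Theorem lemma1 (R : pzRingType) (M : lmodType R -> Prop) (G : groupType)
  (A : lmodType R) (act : A -> G -> A) :
  formation M -> is_RGaction act ->
  (forall L H : G -> Prop, is_subgroup L -> is_subgroup H ->
     (forall x, L x -> H x) ->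
     quot_in M (centr act H) -> quot_in M (centr act L))
  /\
  (forall L H : G -> Prop, is_subgroup L -> is_subgroup H ->
     quot_in M (centr act H) -> quot_in M (centr act L) ->
     quot_in M (centr act (join_subgroup H L))).
Proof.
move=> formM act_ok; split=> [L H _ _ sLH | L H _ _ qH qL].
  have [F1 _] := formM.
  exact: quot_in_sup F1 (submod_centr act_ok L) (centrS sLH).
apply: (quot_in_ext (B := fun a => centr act H a /\ centr act L a)).
  exact: centr_join.
exact: quot_in_meet2 (submod_centr act_ok H) (submod_centr act_ok L) qH qL.
Qed.
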